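(* Let $n,d,a$ be positive integers and $g:=\gcd(d,n)$. If $g\nmid a$, then the triple $(n,d,a)$ is bad.
   Context: Let $R=\mathbb{C}[x_1,\dots,x_n]$ with $\mathfrak{S}_n$ permuting the variables and $R_a^{\mathfrak{S}_n}$ the symmetric polynomials homogeneous of degree $a$. A triple $(n,d,a)$ of positive integers is good if there exists $f\in R_a^{\mathfrak{S}_n}$ such that $x_1^d-x_n^d,\dots,x_{n-1}^d-x_n^d,f$ is a regular sequence (equivalently, $f$ has no zero on $\mathcal{V}_d=\{(z_1,\dots,z_n)\in\mathbb{C}^n: z_i^d=1\ \forall i,\ z_n=1\}$); otherwise it is bad. *)

(* multinomials' mpoly over the complex numbers R[i]
   (complex R from mathcomp-real-closed, R an arbitrary real closed field;
   for R the real numbers this is C). *)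
From HB Require Import structures.
From mathcomp Require Import all_boot all_order all_algebra.
From mathcomp Require Import mpoly complex.
Set Implicit Arguments. Unset Strict Implicit. Unset Printing Implicit Defensive.
Import Order.TTheory GRing.Theory Num.Theory.
Local Open Scope ring_scope.

(* V_d = { z in C^n : z_i^d = 1 for all i, and z_n = 1 }.
   Variables x_1..x_n are indexed by 'I_n; x_n is the index with value n-1. *)
Definition inVd (R : rcfType) (n d : nat) (z : 'I_n -> R[i]) : Prop :=
  (forall i : 'I_n, z i ^+ d = 1) /\
  (forall i : 'I_n, nat_of_ord i = n.-1 -> z i = 1).

Definition good (R : rcfType) (n d k : nat) : Prop :=
  exists f : {mpoly R[i][n]},
    f \is symmetric /\ f \is k.-homog /\
    (forall z : 'I_n -> R[i], inVd d z -> f.@[z] != 0).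

Definition bad (R : rcfType) (n d a : nat) : Prop := ~ good R n d a.

(* Let g = gcd(d, n) and w a primitive g-th root of unity. The point
   z = (w, w^2, ..., w^n) lies on V_d, and the cyclic shift of the variables
   maps z to w z. A symmetric f homogeneous of degree a therefore satisfies
   f(z) = f(w z) = w^a f(z); since g does not divide a, w^a <> 1, so f(z) = 0. *)
From HB Require Import structures.
From mathcomp Require Import all_boot all_order all_algebra all_fingroup all_solvable all_field.
From mathcomp Require Import mpoly complex.
Set Implicit Arguments. Unset Strict Implicit. Unset Printing Implicit Defensive.
Import Order.TTheory GRing.Theory Num.Theory.
Local Open Scope ring_scope.

Lemma closed_field_prim_root_exists (F : closedFieldType) n :
  n%:R != 0 :> F -> exists z : F, n.-primitive_root z.
Proof.
move=> n_neq0; have n_gt0 : (0 < n)%N by rewrite lt0n; apply: contraNneq n_neq0 => ->.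
have [r DXn] := closed_field_poly_normal ('X^n - 1 : {poly F}).
rewrite (monicP _) ?monicXnsubC // scale1r in DXn.
have r_unity : all n.-unity_root r by apply/allP=> z; rewrite -root_prod_XsubC -DXn.
have size_r : (n < (size r).+1)%N by rewrite -(size_prod_XsubC r id) -DXn size_XnsubC.
have r_uniq : uniq r by rewrite -separable_prod_XsubC -DXn separable_Xn_sub_1.
by have /hasP[z _] := has_prim_root n_gt0 r_unity r_uniq size_r; exists z.
Qed.

Section SymmetricEvaluation.

Variables (R : comNzRingType) (n : nat).
Implicit Types (p : {mpoly R[n]}) (v : 'I_n -> R).

Lemma meval_msym (s : 'S_n) p v : (msym s p).@[v] = p.@[v \o s].
Proof.
rewrite /msym /mmap raddf_sum /= mevalE; apply: eq_bigr => m _.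
rewrite mevalM mevalC /mmap1 rmorph_prod /=; congr (_ * _).
by apply: eq_bigr => i _; rewrite rmorphXn /= mevalXU.
Qed.

Lemma meval_sym p (s : 'S_n) v : p \is symmetric -> p.@[v \o s] = p.@[v].
Proof. by move=> /issymP p_sym; rewrite -meval_msym p_sym. Qed.

Lemma meval_homogZ k p c v :
  p \is k.-homog -> p.@[fun i => c * v i] = c ^+ k * p.@[v].
Proof.
move=> /dhomog_mf deg_supp; rewrite !mevalE mulr_sumr big_seq [RHS]big_seq.
apply: eq_bigr => m /deg_supp <-; rewrite mulrCA; congr (_ * _).
under eq_bigr do rewrite exprMn.
by rewrite big_split /= prodrXr mdegE.
Qed.

Lemma meval_sym_homog_shift k p c v :
  p \is symmetric -> p \is k.-homog ->
  (forall i, v (ordS i) = c * v i) -> c ^+ k * p.@[v] = p.@[v].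
Proof.
move=> p_sym p_homog v_shift.
rewrite -meval_homogZ // -[RHS](meval_sym (perm (@ordS_inj n)) _ p_sym).
by apply: meval_eq => i /=; rewrite permE v_shift.
Qed.

End SymmetricEvaluation.

Lemma exprS_ordS (R : nzRingType) n (w : R) (i : 'I_n) :
  w ^+ n = 1 -> w ^+ (ordS i).+1 = w * w ^+ i.+1.
Proof. by move=> wn1; rewrite -exprS /= -(expr_mod _ wn1) -addn1 modnDml addn1 expr_mod. Qed.

Lemma inVd_powers (R : rcfType) n d (w : R[i]) :
  (0 < n)%N -> w ^+ d = 1 -> w ^+ n = 1 -> inVd d (fun i : 'I_n => w ^+ i.+1).
Proof.
move=> n_gt0 wd1 wn1; split=> [i | i ->]; last by rewrite prednK.
by rewrite -exprM mulnC exprM wd1 expr1n.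
Qed.

Theorem proposition3p15 (R : rcfType) (n d a : nat) :
  (0 < n)%N -> (0 < d)%N -> (0 < a)%N ->
  ~~ (gcdn d n %| a)%N -> bad R n d a.
Proof.
move=> n_gt0 d_gt0 _ g_ndvd_a [f [f_sym [f_homog f_nz]]].
have g_neq0 : (gcdn d n)%:R != 0 :> R[i] by rewrite pnatr_eq0 -lt0n gcdn_gt0 d_gt0.
have [w w_prim] := closed_field_prim_root_exists g_neq0.
have w_pow1 m : (gcdn d n %| m)%N -> w ^+ m = 1 by rewrite (prim_order_dvd w_prim) => /eqP.
have [wd1 wn1] := (w_pow1 _ (dvdn_gcdl d n), w_pow1 _ (dvdn_gcdr d n)).
pose z (i : 'I_n) := w ^+ i.+1.
have z_shift i : z (ordS i) = w * z i by apply: exprS_ordS.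
have fz_fixed := meval_sym_homog_shift f_sym f_homog z_shift.
have : (w ^+ a - 1) * f.@[z] = 0 by rewrite mulrBl mul1r fz_fixed subrr.
have z_Vd : inVd d z by apply: inVd_powers.
by apply/eqP; rewrite mulf_neq0 ?f_nz // subr_eq0 -(prim_order_dvd w_prim).
Qed.
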